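(* Consider the combined heat and power network described in the context, operating in Mode 1, after a step change in the electrical load $p^L$. At an equilibrium, the generation deviations $p^G$, the heat pump powers $p^P=(p^P_j)_{j\in H_e}$ and $p^U=(D_j\omega_j)_{j\in N_e}$ form a solution of $$\min_{p^G,p^P,p^U}\ \tfrac12(p^G)^TQ_ep^G+\tfrac12(p^P)^TQ_pp^P+\tfrac12(p^U)^TQ_up^U\quad\text{s.t.}\quad \mathbf 1^Tp^G=\mathbf 1^Tp^L+\mathbf 1^Tp^P+\mathbf 1^Tp^U,$$ where $Q_e=\mathrm{diag}(Q_{e,jj})_{j\in N_e^G}$, $Q_p=\mathrm{diag}(1/a_{1,j})_{j\in H_e}$, $Q_u=\mathrm{diag}(1/D_j)_{j\in N_e}$. Moreover, given the heat pump power consumption $\bar p^P$ in this solution (so that $h^P_{j_k}=C_o\bar p^P_{i_k}$, $k\in H$), the equilibrium deviations $h^G=(h^G_j)_{j\in E_h^G}$ of the conventional heat sources form the solution of $$\min_{h^G}\ \tfrac12(h^G)^TQ_hh^G\quad\text{s.t.}\quad \mathbf 1^Th^G=\mathbf 1^T(h^L-h^P),$$ where $Q_h=\mathrm{diag}(Q_{h,jj})_{j\in E_h^G}$.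
   Context: Power network: a directed graph $(N_e,E_e)$ with buses $N_e$ and lines $E_e$, arbitrarily oriented. $N_e^G\subseteq N_e$ is the set of generator buses and $H_e\subseteq N_e$ the set of buses to which heat pumps are connected. Heat network: a directed graph $(N_h,E_h)$, each edge $j$ oriented along its mass flow with inlet node $s(j)$ and outlet node $t(j)$; among the edges are heat-pump edges $H_h$, conventional heat source edges $E_h^G$ and heat-load edges $E_h^L$. Heat pumps are indexed by a finite set $H$; heat pump $k\in H$ is connected to bus $i_k\in H_e$ and corresponds to edge $j_k\in H_h$. Lines: for $(i,j)\in E_e$, $\dot\eta_{ij}=\omega_i-\omega_j$, $p_{ij}=B_{ij}\sin(\eta_{ij})-p^{\mathrm{nom}}_{ij}$, $B_{ij}>0$. Every bus $j\in N_e$: $M_j\dot\omega_j=-p^L_j-p^P_j+p^G_j-p^U_j+\sum_{i:(i,j)\in E_e}p_{ij}-\sum_{k:(j,k)\in E_e}p_{jk}$, with $M_j>0$, $p^U_j=D_j\omega_j$, $D_j>0$, $p^L_j$ constant, $p^G_j=0$ for $j\notin N_e^G$, $p^P_j=0$ for $j\notin H_e$. Heat network ($\rho C_p=1$), constant positive mass flows $q^E_j$, volumes $V^E_j,V^N_k>0$: $V^E_j\dot T^E_j=q^E_j(T^N_{s(j)}-T^E_j)+h^G_j+h^P_j-h^L_j$ for each edge $j$, $V^N_k\dot T^N_k=\sum_{j:t(j)=k}q^E_j(T^E_j-T^N_k)$ for each node $k$, where $h^G_j=0$ unless $j\in E_h^G$, $h^P_j=0$ unless $j\in H_h$, $h^L_j=0$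 unless $j\in E_h^L$, $h^L_j$ constant. In matrix form $V\dot T=-A_hT+\mathrm{col}(h^G+h^P-h^L,\mathbf 0)$ with $T=\mathrm{col}(T^E,T^N)$, $V=\mathrm{diag}(V^E,V^N)$, where $A_h\mathbf 1=0$, $\mathbf 1^TA_h=0$ and $A_h+A_h^T$ is positive semidefinite with a simple zero eigenvalue. Average temperature $\bar T=\mathbf 1^TVT/(\mathbf 1^TV\mathbf 1)$. Generation control: $\dot p^G_j=-p^G_j-\frac{1}{Q_{e,jj}}\omega_j$ ($j\in N_e^G$), $\dot h^G_j=-h^G_j-\frac{1}{Q_{h,jj}}\bar T$ ($j\in E_h^G$), with $Q_{e,jj},Q_{h,jj}>0$. Heat pump: $h^P_{j_k}=C_op^P_{i_k}$, $k\in H$, constant $C_o$. Mode 1: $p^P_j=a_{1,j}\omega_j$ for $j\in H_e$, constants $a_{1,j}>0$. *)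

From HB Require Import structures.
From mathcomp Require Import all_boot all_order all_algebra.
From mathcomp Require Import reals trigo.
Set Implicit Arguments. Unset Strict Implicit. Unset Printing Implicit Defensive.
Import Order.TTheory GRing.Theory Num.Theory.
Local Open Scope ring_scope.

Section CHP.
Variable R : realType.

Variable Ne : finType.
Variable Ee : {set Ne * Ne}.                (* lines (i,j), arbitrary orientation *)

Definition line_flow (B pnom eta : Ne * Ne -> R) (e : Ne * Ne) : R :=
  B e * sin (eta e) - pnom e.

(* Right-hand side of  M_j dω_j/dt = ... , with p^U_j = D_j ω_j *)
Definition bus_rhs (B pnom eta : Ne * Ne -> R) (D pL pP pG omega : Ne -> R)
  (j : Ne) : R :=
  - pL j - pP j + pG j - D j * omega j
  + \sum_(e in Ee | e.2 == j) line_flow B pnom eta e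
  - \sum_(e in Ee | e.1 == j) line_flow B pnom eta e.

Definition elec_adj : rel Ne := fun a b => ((a, b) \in Ee) || ((b, a) \in Ee).

Variables (Eh Nh : finType) (s t : Eh -> Nh).

(* the two blocks of A_h T, T = col(T^E, T^N):
   V dT/dt = - A_h T + col(h^G + h^P - h^L, 0) *)
Definition Ah_E (q : Eh -> R) (TE : Eh -> R) (TN : Nh -> R) (j : Eh) : R :=
  q j * (TE j - TN (s j)).
Definition Ah_N (q : Eh -> R) (TE : Eh -> R) (TN : Nh -> R) (k : Nh) : R :=
  \sum_(j | t j == k) q j * (TN k - TE j).

Definition Ah_left_kernel_one (q : Eh -> R) : Prop :=
  forall (TE : Eh -> R) (TN : Nh -> R),
    \sum_j Ah_E q TE TN j + \sum_k Ah_N q TE TN k = 0.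

Definition Tbar (VE : Eh -> R) (VN : Nh -> R) (TE : Eh -> R) (TN : Nh -> R) : R :=
  (\sum_j VE j * TE j + \sum_k VN k * TN k) / (\sum_j VE j + \sum_k VN k).

Definition elec_cost (NeG He : {set Ne}) (QeD a1 D : Ne -> R)
  (xG xP xU : Ne -> R) : R :=
  2^-1 * (\sum_(j in NeG) QeD j * xG j ^+ 2)
  + 2^-1 * (\sum_(j in He) (a1 j)^-1 * xP j ^+ 2)
  + 2^-1 * (\sum_j (D j)^-1 * xU j ^+ 2).

Definition elec_feasible (NeG He : {set Ne}) (pL : Ne -> R)
  (xG xP xU : Ne -> R) : Prop :=
  \sum_(j in NeG) xG j = \sum_j pL j + \sum_(j in He) xP j + \sum_j xU j.

Definition elec_opt (NeG He : {set Ne}) (QeD a1 D pL : Ne -> R)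
  (xG xP xU : Ne -> R) : Prop :=
  elec_feasible NeG He pL xG xP xU /\
  forall yG yP yU : Ne -> R, elec_feasible NeG He pL yG yP yU ->
    elec_cost NeG He QeD a1 D xG xP xU <= elec_cost NeG He QeD a1 D yG yP yU.

Definition heat_cost (EhG : {set Eh}) (QhD : Eh -> R) (x : Eh -> R) : R :=
  2^-1 * (\sum_(j in EhG) QhD j * x j ^+ 2).

Definition heat_feasible (EhG : {set Eh}) (hL hP : Eh -> R) (x : Eh -> R) : Prop :=
  \sum_(j in EhG) x j = \sum_j (hL j - hP j).

Definition heat_opt (EhG : {set Eh}) (QhD hL hP : Eh -> R) (x : Eh -> R) : Prop :=
  heat_feasible EhG hL hP x /\
  forall y : Eh -> R, heat_feasible EhG hL hP y ->
    heat_cost EhG QhD x <= heat_cost EhG QhD y.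

End CHP.

(* At an equilibrium all frequency deviations are equal, omega_j = w, because
   the power network is connected and every line has omega_i = omega_j.  The
   equilibrium equations then say that every decision variable has the same
   marginal cost up to sign: Q_e p^G = -w, p^P / a_1 = w and p^U / D = w.
   This is the KKT condition of the electrical problem; since its cost is a
   separable convex quadratic, the tangent inequality
   c x^2 + 2 c x (y - x) <= c y^2 shows that it is also sufficient.
   Feasibility is the power balance obtained by summing the bus equations, in
   which every line flow appears once with each sign.  The heat problem is the
   same argument with multiplier -Tbar, feasibility coming from 1^T A_h = 0. *)
From HB Require Import structures.
From mathcomp Require Import all_boot all_order all_algebra.
From mathcomp Require Import reals trigo.
From mathcomp Require Import ring lra.
Import Order.TTheory GRing.Theory Num.Theory.
Local Open Scope ring_scope.

Lemma sum_wsqr_tangent_le {R : realFieldType} {T : finType} {A : {set T}}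
    {c x : T -> R} (y : T -> R) {g : R} :
  {in A, forall j, 0 <= c j} -> {in A, forall j, c j * x j = g} ->
  2^-1 * (\sum_(j in A) c j * x j ^+ 2)
    + g * (\sum_(j in A) y j - \sum_(j in A) x j)
  <= 2^-1 * (\sum_(j in A) c j * y j ^+ 2).
Proof.
move=> c_ge0 cx_g; rewrite -sumrB !mulr_sumr -big_split /=.
apply: ler_sum => j jA; rewrite -(cx_g j jA).
have := c_ge0 j jA => cj_ge0.
have : 0 <= c j * (y j - x j) ^+ 2 by rewrite mulr_ge0 ?sqr_ge0.
by rewrite !expr2 => ?; nra.
Qed.

Lemma pdivr_eq0 {R : numFieldType} {a b : R} : 0 < b -> a / b = 0 -> a = 0.
Proof.
by move=> b_gt0 /eqP; rewrite mulf_eq0 invr_eq0 (gt_eqF b_gt0) orbF => /eqP.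
Qed.

Lemma droop_equilibrium {R : numFieldType} {c x v : R} :
  c != 0 -> - x - c^-1 * v = 0 -> c * x = - v.
Proof.
move=> c_neq0 /eqP; rewrite subr_eq0 eqr_oppLR => /eqP ->.
by rewrite mulrN mulVKf.
Qed.

Lemma connect_eq {T : finType} {X : eqType} {e : rel T} {f : T -> X} :
  (forall a b, e a b -> f a = f b) -> forall a b, connect e a b -> f a = f b.
Proof.
move=> f_e a b ab.
have f_closed : closed e [pred z | f z == f a].
  by move=> u v /f_e; rewrite !inE => ->.
by have := closed_connect f_closed ab; rewrite !inE eqxx => /esym/eqP.
Qed.

Section PowerNetwork.
Variables (R : realType) (Ne : finType) (Ee : {set Ne * Ne}).

Lemma sum_bus_rhs (B pnom eta : Ne * Ne -> R) (D pL pP pG omega : Ne -> R) :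
  \sum_j bus_rhs Ee B pnom eta D pL pP pG omega j
  = \sum_j pG j - \sum_j pL j - \sum_j pP j - \sum_j D j * omega j.
Proof.
rewrite /bus_rhs !big_split /= !sumrN.
set f := line_flow B pnom eta.
have -> : \sum_j \sum_(e in Ee | e.2 == j) f e = \sum_(e in Ee) f e.
  by rewrite [RHS](partition_big (fun e : Ne * Ne => e.2) predT).
have -> : \sum_j \sum_(e in Ee | e.1 == j) f e = \sum_(e in Ee) f e.
  by rewrite [RHS](partition_big (fun e : Ne * Ne => e.1) predT).
lra.
Qed.

Lemma elec_feasible_balance {NeG He : {set Ne}} {B pnom eta : Ne * Ne -> R}
    {D pL pP pG omega : Ne -> R} :
  (forall j, j \notin NeG -> pG j = 0) -> (forall j, j \notin He -> pP j = 0) ->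
  (forall j, bus_rhs Ee B pnom eta D pL pP pG omega j = 0) ->
  elec_feasible NeG He pL pG pP (fun j => D j * omega j).
Proof.
move=> pG_supp pP_supp bus_eq0.
have := sum_bus_rhs B pnom eta D pL pP pG omega; rewrite big1 //.
by rewrite /elec_feasible (big_rmcond _ _ pG_supp) (big_rmcond _ _ pP_supp); lra.
Qed.

Lemma elec_opt_common_multiplier {NeG He : {set Ne}} {QeD a1 D pL : Ne -> R}
    {xG xP xU : Ne -> R} {w : R} :
  {in NeG, forall j, 0 <= QeD j} -> {in He, forall j, 0 <= a1 j} ->
  (forall j, 0 <= D j) -> elec_feasible NeG He pL xG xP xU ->
  {in NeG, forall j, QeD j * xG j = - w} ->
  {in He, forall j, (a1 j)^-1 * xP j = w} -> (forall j, (D j)^-1 * xU j = w) ->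
  elec_opt NeG He QeD a1 D pL xG xP xU.
Proof.
move=> QeD_ge0 a1_ge0 D_ge0 x_feas xG_w xP_w xU_w.
split=> // yG yP yU y_feas.
have a1V_ge0 : {in He, forall j, 0 <= (a1 j)^-1}.
  by move=> j /a1_ge0; rewrite invr_ge0.
have DV_ge0 : {in [set: Ne], forall j, 0 <= (D j)^-1}.
  by move=> j _; rewrite invr_ge0.
have := sum_wsqr_tangent_le yG QeD_ge0 xG_w.
have := sum_wsqr_tangent_le yP a1V_ge0 xP_w.
have := sum_wsqr_tangent_le yU DV_ge0 (fun j _ => xU_w j).
rewrite /elec_cost !(eq_bigl _ _ (@in_setT Ne)).
move: x_feas y_feas; rewrite /elec_feasible => xbal ybal.
have : w * (\sum_(j in NeG) yG j - \sum_(j in NeG) xG j) =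
    w * (\sum_(j in He) yP j - \sum_(j in He) xP j) + w * (\sum_j yU j - \sum_j xU j).
  by rewrite xbal ybal; ring.
lra.
Qed.

End PowerNetwork.

Section HeatNetwork.
Variables (R : realType) (Eh Nh : finType) (s t : Eh -> Nh).

Lemma heat_feasible_balance {EhG : {set Eh}} {q hL hP hG TE : Eh -> R}
    {TN : Nh -> R} :
  Ah_left_kernel_one s t q -> (forall j, j \notin EhG -> hG j = 0) ->
  (forall j, - Ah_E s q TE TN j + (hG j + hP j - hL j) = 0) ->
  (forall k, Ah_N t q TE TN k = 0) ->
  heat_feasible EhG hL hP hG.
Proof.
move=> Ah_ker hG_supp edge_eq0 node_eq0.
have := Ah_ker TE TN; rewrite [X in _ + X]big1 // addr0.
rewrite (eq_bigr (fun j => hG j + hP j - hL j)); last first.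
  by move=> j _; have := edge_eq0 j; lra.
rewrite /heat_feasible (big_rmcond _ _ hG_supp) sumrB !big_split /= sumrN.
lra.
Qed.

Lemma heat_opt_common_multiplier {EhG : {set Eh}} {QhD hL hP x : Eh -> R}
    {g : R} :
  {in EhG, forall j, 0 <= QhD j} -> heat_feasible EhG hL hP x ->
  {in EhG, forall j, QhD j * x j = g} -> heat_opt EhG QhD hL hP x.
Proof.
move=> QhD_ge0 x_feas x_g; split=> // y y_feas.
have := sum_wsqr_tangent_le y QhD_ge0 x_g.
by rewrite /heat_cost x_feas y_feas; lra.
Qed.

End HeatNetwork.

Theorem proposition1
  (R : realType)
  (* power network *)
  (Ne : finType) (Ee : {set Ne * Ne}) (NeG He : {set Ne})
  (B pnom : Ne * Ne -> R) (M D QeD a1 pL : Ne -> R)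
  (* heat network *)
  (Eh Nh : finType) (s t : Eh -> Nh) (EhG EhL : {set Eh})
  (q VE QhD hL : Eh -> R) (VN : Nh -> R)
  (* heat pumps *)
  (H : finType) (i_ : H -> Ne) (j_ : H -> Eh) (Co : R)
  (* an equilibrium state (with the algebraic variables p^P, h^P) *)
  (eta : Ne * Ne -> R) (omega pG pP : Ne -> R)
  (TE hG hP : Eh -> R) (TN : Nh -> R) :
  (* standing assumptions *)
  (forall e, e \in Ee -> 0 < B e) ->
  (forall j, 0 < M j) -> (forall j, 0 < D j) ->
  (forall j, j \in NeG -> 0 < QeD j) ->
  (forall j, j \in He -> 0 < a1 j) ->
  (forall j, 0 < q j) -> (forall j, 0 < VE j) -> (forall k, 0 < VN k) ->
  (forall j, j \in EhG -> 0 < QhD j) ->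
  He = [set i_ k | k in [set: H]] ->
  (forall j, j \notin EhL -> hL j = 0) ->
  Ah_left_kernel_one s t q ->
  (forall a b : Ne, connect (elec_adj Ee) a b) ->
  (* algebraic relations: generation support, Mode 1 heat pumps *)
  (forall j, j \notin NeG -> pG j = 0) ->
  (forall j, j \notin EhG -> hG j = 0) ->
  (forall j, j \in He -> pP j = a1 j * omega j) ->
  (forall j, j \notin He -> pP j = 0) ->
  (forall k, hP (j_ k) = Co * pP (i_ k)) ->
  (forall j, j \notin [set j_ k | k in [set: H]] -> hP j = 0) ->
  (* equilibrium: all time derivatives vanish *)
  (forall e, e \in Ee -> omega e.1 - omega e.2 = 0) ->
  (forall j, bus_rhs Ee B pnom eta D pL pP pG omega j / M j = 0) ->
  (forall j, j \in NeG -> - pG j - (QeD j)^-1 * omega j = 0) ->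
  (forall j, (- Ah_E s q TE TN j + (hG j + hP j - hL j)) / VE j = 0) ->
  (forall k, (- Ah_N t q TE TN k) / VN k = 0) ->
  (forall j, j \in EhG -> - hG j - (QhD j)^-1 * Tbar VE VN TE TN = 0) ->
  (* conclusions *)
  elec_opt NeG He QeD a1 D pL pG pP (fun j => D j * omega j) /\
  heat_opt EhG QhD hL hP hG.
Proof.
move=> _ M_gt0 D_gt0 QeD_gt0 a1_gt0 _ VE_gt0 VN_gt0 QhD_gt0 _ _ Ah_ker conn
  pG_supp hG_supp pP_mode1 pP_supp _ _ line_eq bus_eq pG_droop edge_eq node_eq
  hG_droop.
have omega_adj a b : elec_adj Ee a b -> omega a = omega b.
  by case/orP=> /line_eq/subr0_eq /= ->.
have [w omega_w] : exists w, forall j, omega j = w.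
  case: (pickP (@predT Ne)) => [j0 _ | Ne0]; last by exists 0 => j; have := Ne0 j.
  by exists (omega j0) => j; exact: connect_eq omega_adj _ _ (conn j j0).
split.
- have pG_w : {in NeG, forall j, QeD j * pG j = - w}.
    move=> j jG; rewrite -(omega_w j); apply: droop_equilibrium _ (pG_droop j jG).
    by rewrite gt_eqF ?QeD_gt0.
  have pP_w : {in He, forall j, (a1 j)^-1 * pP j = w}.
    by move=> j jH; rewrite pP_mode1 // omega_w mulKf ?gt_eqF ?a1_gt0.
  have pU_w j : (D j)^-1 * (D j * omega j) = w by rewrite omega_w mulKf ?gt_eqF.
  apply: elec_opt_common_multiplier pG_w pP_w pU_w.
  + by move=> j /QeD_gt0/ltW.
  + by move=> j /a1_gt0/ltW.
  + by move=> j; apply/ltW.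
  + apply: elec_feasible_balance pG_supp pP_supp _ => j.
    exact: pdivr_eq0 (M_gt0 j) (bus_eq j).
- have hG_T : {in EhG, forall j, QhD j * hG j = - Tbar VE VN TE TN}.
    move=> j jG; apply: droop_equilibrium _ (hG_droop j jG).
    by rewrite gt_eqF ?QhD_gt0.
  apply: heat_opt_common_multiplier _ _ hG_T.
  + by move=> j /QhD_gt0/ltW.
  + apply: heat_feasible_balance Ah_ker hG_supp _ _ => [j | k].
      exact: pdivr_eq0 (VE_gt0 j) (edge_eq j).
    by apply: oppr_inj; rewrite oppr0; exact: pdivr_eq0 (VN_gt0 k) (node_eq k).
Qed.
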